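(* Consider the vehicle platoon model described in the context, with communication attempt times $\mathcal S=\{s_0,s_1,\ldots\}$, $s_j=jT$, and the time-discretized braking model, and let $0\le t_0<t_1<t_2<\cdots$ be simulation time instants with $\mathcal T\triangleq\{t_0,t_1,t_2,\ldots\}$. If $\mathcal S\subseteq\mathcal T$ and there exists $\alpha>0$ such that for every $k\in\mathbb{N}_0$ $$t_{k+1}-t_k\le \frac{1}{\|A_{\mathrm c}\|}\ln\!\left(\frac{\alpha}{\sqrt2\left(\|x(t_k)\|+\frac{\|B_{\mathrm c}u(t_k)\|}{\|A_{\mathrm c}\|}\right)}+1\right),$$ then $$|d_i(t)-d_i(t_k)|\le\alpha\quad\text{for all }t\in[t_k,t_{k+1}),$$ for every $k\in\mathbb{N}_0$ and every $i\in\{2,3,\ldots,n\}$, where $d_i(t)=p_{i-1}(t)-p_i(t)-L_i$.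
   Context: $\|\cdot\|$ denotes the Euclidean norm and the induced matrix norm. Fix $n\in\mathbb{N}$, $n\ge 2$, constants $\tau_{\mathrm d}>0$, $h>0$, $k_{\mathrm p},k_{\mathrm d}\in\mathbb{R}$, vehicle lengths $L_i>0$, standstill distance $r>0$, communication period $T>0$. Communication attempts happen at $s_j=jT$, $j\in\mathbb{N}_0$; for $i\in\{1,\ldots,n-1\}$, $j\in\mathbb{N}$, $l^i_j\in\{0,1\}$ are arbitrary failure indicators ($1$ = failure, $0$ = success). State: $x(t)=[x_0^\top,x_1^\top,\ldots,x_n^\top]^\top\in\mathbb{R}^{3+6n}$, $x_0=[p_0,v_0,a_0]^\top$ (virtual reference vehicle), $x_i=[e_i,\dot e_i,p_i,v_i,a_i,u_i]^\top$ for $i=1,\ldots,n$ (position, velocity, acceleration, desired acceleration; spacing error $e_i=(p_{i-1}-p_i-L_i)-(r+hv_i)$ and its derivative as state components). Input: $u(t)=[u_0(t),\hat u_0(t),\ldots,\hat u_{n-1}(t)]^\top\in\mathbb{R}^{1+n}$, $\hat u_0=u_0$, and for $i\in\{1,\ldots,n-1\}$: $\hat u_i(s_0)=u_i(s_0)$; for $j\in\mathbb{N}$, $\hat u_i(s_j)=\hat u_i(s_{j-1})$ if $l^i_j=1$, $\hat u_i(s_j)=u_i(s_j)$ if $l^i_j=0$; $\hat u_i(t)=\hat u_i(s_j)$ for $t\in(s_j,s_{j+1})$. Dynamics: $\dot x=A_{\mathrm c}x+B_{\mathrm c}u$, $A_{\mathrm c}$ block lower-bidiagonal with diagonal blocks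 $M,N,\ldots,N$, block below $M$ equal to $G$, remaining subdiagonal blocks $H$; $B_{\mathrm c}=\mathrm{blockdiag}(E,F,\ldots,F)$; here $M=\begin{bmatrix}0&1&0\\0&0&1\\0&0&-1/\tau_{\mathrm d}\end{bmatrix}$, $N=\begin{bmatrix}0&0&0&-1&-h&0\\0&0&0&0&h/\tau_{\mathrm d}-1&-h/\tau_{\mathrm d}\\0&0&0&1&0&0\\0&0&0&0&1&0\\0&0&0&0&-1/\tau_{\mathrm d}&1/\tau_{\mathrm d}\\k_{\mathrm p}/h&k_{\mathrm d}/h&0&0&0&-1/h\end{bmatrix}$, $G\in\mathbb{R}^{6\times3}$ with $G_{12}=G_{23}=1$, other entries $0$; $H\in\mathbb{R}^{6\times6}$ with $H_{14}=H_{25}=1$, other entries $0$; $E=[0,0,1/\tau_{\mathrm d}]^\top$, $F=[0,0,0,0,0,1/h]^\top$. Time-discretized braking model: $t_{\mathrm{brake}}>0$, $\gamma>0$, $0<\eta\le1/(4\tau_{\mathrm d})$. Let $(\bar p_0,\bar v_0,\bar a_0)$ solve $\dot{\bar p}_0=\bar v_0$, $\dot{\bar v}_0=\bar a_0$, $\dot{\bar a}_0=(-\bar a_0+\bar u_0)/\tau_{\mathrm d}$ with $\bar u_0(t)=0$ for $t<t_{\mathrm{brake}}$ and $\bar u_0(t)=\max\{-\gamma,-\eta\bar v_0(t)\}$ for $t\ge t_{\mathrm{brake}}$; $t^*=\min\{t\ge t_{\mathrm{brake}}:-\eta\bar v_0(t)\ge-\gamma\}$; $\lambda_{1,2}=\frac{-1\pm\sqrt{1-4\eta\tau_{\mathrm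 d}}}{2\tau_{\mathrm d}}$, $\lambda_3=-\frac1{2\tau_{\mathrm d}}$, $\beta_2=\frac{\bar a_0(t^* )-\lambda_2\gamma/\eta}{\lambda_1-\lambda_2}$, $\beta_3=\frac{\lambda_1\gamma/\eta-\bar a_0(t^* )}{\lambda_1-\lambda_2}$, $\beta_4=\gamma/\eta$, $\beta_5=\bar a_0(t^* )+2\gamma$. Then $u_0(t)=u_{0,k}$ on $[s_k,s_{k+1})$ with $u_{0,k}=0$ if $kT<t_{\mathrm{brake}}$; $-\gamma$ if $t_{\mathrm{brake}}\le kT<t^*$; $-\eta(\beta_2e^{\lambda_1(kT-t^* )}+\beta_3e^{\lambda_2(kT-t^* )})$ if $kT\ge t^*$, $\eta<\frac1{4\tau_{\mathrm d}}$; $-\eta e^{\lambda_3(kT-t^* )}(\beta_4+\beta_5(kT-t^* ))$ if $kT\ge t^*$, $\eta=\frac1{4\tau_{\mathrm d}}$. *)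

From HB Require Import structures.
From mathcomp Require Import all_boot all_order all_algebra.
From mathcomp Require Import all_classical all_reals all_analysis.
Set Implicit Arguments. Unset Strict Implicit. Unset Printing Implicit Defensive.
Import Order.TTheory GRing.Theory Num.Theory.
Import numFieldNormedType.Exports.
Local Open Scope classical_set_scope.
Local Open Scope ring_scope.

Section Platoon.
Variable R : realType.

Definition enorm (m : nat) (v : 'cV[R]_m) : R :=
  Num.sqrt (\sum_(i < m) v i ord0 ^+ 2).

Definition opnorm (m p : nat) (A : 'M[R]_(m, p)) : R :=
  sup [set enorm (A *m v) | v in [set v : 'cV[R]_p | enorm v <= 1]].

Definition sdim (n : nat) : nat := (6 * n).+3.
Definition idim (n : nat) : nat := n.+1.

Definition vcomp (m : nat) (v : 'cV[R]_m.+1) (k : nat) : R := v (inord k) ord0.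

(* 0-based state index of component c (0..5 = e, edot, p, v, a, u)
   of vehicle i (i = 1..n);  reference vehicle: 0 = p0, 1 = v0, 2 = a0 *)
Definition vidx (i c : nat) : nat := (3 + 6 * (i - 1) + c)%N.
Definition pidx (i : nat) : nat := if i == 0%N then 0%N else vidx i 2.
Definition e_idx (i : nat) := vidx i 0.
Definition ed_idx (i : nat) := vidx i 1.
Definition v_idx (i : nat) : nat := if i == 0%N then 1%N else vidx i 3.
Definition a_idx (i : nat) : nat := if i == 0%N then 2%N else vidx i 4.
Definition u_idx (i : nat) := vidx i 5.

Definition blk (k : nat) : nat * nat :=
  (if k < 3 then (0, k) else (((k - 3) %/ 6).+1, (k - 3) %% 6))%N.

Definition Mf (tau : R) (a b : nat) : R :=
  match a, b with
  | 0, 1 => 1 | 1, 2 => 1 | 2, 2 => - 1 / tau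
  | _, _ => 0 end.

Definition Nf (tau h kp kd : R) (a b : nat) : R :=
  match a, b with
  | 0, 3 => -1 | 0, 4 => - h
  | 1, 4 => h / tau - 1 | 1, 5 => - (h / tau)
  | 2, 3 => 1
  | 3, 4 => 1
  | 4, 4 => - 1 / tau | 4, 5 => 1 / tau
  | 5, 0 => kp / h | 5, 1 => kd / h | 5, 5 => - 1 / h
  | _, _ => 0 end.

Definition Gf (a b : nat) : R :=
  match a, b with 0, 1 => 1 | 1, 2 => 1 | _, _ => 0 end.

Definition Hf (a b : nat) : R :=
  match a, b with 0, 3 => 1 | 1, 4 => 1 | _, _ => 0 end.

Definition Ef (tau : R) (a : nat) : R := if a == 2%N then 1 / tau else 0.
Definition Ff (h : R) (a : nat) : R := if a == 5%N then 1 / h else 0.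

Definition Ac (n : nat) (tau h kp kd : R) : 'M[R]_(sdim n) :=
  \matrix_(i, j)
    let: (bi, ri) := blk i in let: (bj, rj) := blk j in
    if (bi == 0%N) && (bj == 0%N) then Mf tau ri rj
    else if bi == bj then Nf tau h kp kd ri rj
    else if (bi == 1%N) && (bj == 0%N) then Gf ri rj
    else if bi == bj.+1 then Hf ri rj
    else 0.

Definition Bc (n : nat) (tau h : R) : 'M[R]_(sdim n, idim n) :=
  \matrix_(i, c)
    let: (bi, ri) := blk i in
    if bi == 0%N then (if (c : nat) == 0%N then Ef tau ri else 0)
    else if (c : nat) == bi then Ff h ri else 0.

Definition sidx (T t : R) : nat := Num.truncn (t / T).

Definition u0k (tau T tbrake gamma eta ts a0ts : R) (k : nat) : R :=
  let s := k%:R * T in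
  let lam1 := (-1 + Num.sqrt (1 - 4 * eta * tau)) / (2 * tau) in
  let lam2 := (-1 - Num.sqrt (1 - 4 * eta * tau)) / (2 * tau) in
  let lam3 := - (1 / (2 * tau)) in
  let beta2 := (a0ts - lam2 * gamma / eta) / (lam1 - lam2) in
  let beta3 := (lam1 * gamma / eta - a0ts) / (lam1 - lam2) in
  let beta4 := gamma / eta in
  let beta5 := a0ts + 2 * gamma in
  if s < tbrake then 0
  else if s < ts then - gamma
  else if eta < 1 / (4 * tau) then
    - eta * (beta2 * expR (lam1 * (s - ts)) + beta3 * expR (lam2 * (s - ts)))
  else - eta * expR (lam3 * (s - ts)) * (beta4 + beta5 * (s - ts)).

Fixpoint uhat (n : nat) (x : R -> 'cV[R]_(sdim n)) (T : R)
    (l : nat -> nat -> bool) (i j : nat) : R :=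
  match j with
  | 0 => vcomp (x 0) (u_idx i)
  | j'.+1 => if l i j then uhat x T l i j'
             else vcomp (x (j%:R * T)) (u_idx i)
  end.

(* input vector u(t) = [u_0, hat u_0 (= u_0), hat u_1, ..., hat u_{n-1}] *)
Definition uin (n : nat) (x : R -> 'cV[R]_(sdim n)) (tau T tbrake gamma eta ts a0ts : R)
    (l : nat -> nat -> bool) (t : R) : 'cV[R]_(idim n) :=
  \col_(c < idim n)
    let u0 := u0k tau T tbrake gamma eta ts a0ts (sidx T t) in
    if ((c : nat) <= 1)%N then u0 else uhat x T l (c.-1) (sidx T t).

Definition dgap (n : nat) (x : R -> 'cV[R]_(sdim n)) (L : nat -> R) (i : nat) (t : R) : R :=
  vcomp (x t) (pidx i.-1) - vcomp (x t) (pidx i) - L i.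

End Platoon.

From HB Require Import structures.
From mathcomp Require Import all_boot all_order all_algebra.
From mathcomp Require Import all_classical all_reals all_analysis.
From mathcomp Require Import ring lra zify.
Import Order.TTheory GRing.Theory Num.Theory.
Import numFieldNormedType.Exports.
Local Open Scope classical_set_scope.
Local Open Scope ring_scope.

(* Between two consecutive simulation instants there is no communication
   instant, so the held input is constant and x solves an affine ODE
   x' = A x + b.  Grönwall's argument, applied to the smoothed norm
   sqrt(|x - x(t_k)|^2 + eps^2) (which is differentiable), gives
   |x(t) - x(t_k)| <= (|x(t_k)| + |b|/|A|) (e^{|A| (t - t_k)} - 1), and the
   step-size condition bounds this by alpha / sqrt 2.  Finally d_i(t) - d_i(t_k)
   is a difference of two distinct coordinates of x(t) - x(t_k), hence at most
   sqrt 2 |x(t) - x(t_k)| in absolute value. *)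

Section EuclideanNorm.
Context {R : realType} {m : nat}.
Implicit Types v w : 'cV[R]_m.

Lemma enorm_ge0 v : 0 <= enorm v.
Proof. exact: sqrtr_ge0. Qed.

Lemma sqr_enorm v : enorm v ^+ 2 = \sum_(i < m) v i ord0 ^+ 2.
Proof. by rewrite sqr_sqrtr // sumr_ge0 // => i _; rewrite sqr_ge0. Qed.

Lemma enorm0 : enorm (0 : 'cV[R]_m) = 0.
Proof. by rewrite /enorm big1 ?sqrtr0 // => i _; rewrite mxE expr0n. Qed.

Lemma enorm_eq0 v : (enorm v == 0) = (v == 0).
Proof.
apply/eqP/eqP => [|->]; last exact: enorm0.
move=> /(congr1 (fun x => x ^+ 2)); rewrite sqr_enorm expr0n /= => /eqP.
rewrite psumr_eq0 => [/allP v0|i _]; last exact: sqr_ge0.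
apply/matrixP => i j; rewrite ord1 mxE.
by have /implyP/(_ isT) := v0 i (mem_index_enum i); rewrite sqrf_eq0 => /eqP.
Qed.

Lemma enormZ (c : R) v : enorm (c *: v) = `|c| * enorm v.
Proof.
rewrite /enorm -sqrtr_sqr -sqrtrM ?sqr_ge0 // mulr_sumr.
by congr Num.sqrt; apply: eq_bigr => i _; rewrite mxE exprMn.
Qed.

Lemma sum_mul_le_enorm v w :
  \sum_(i < m) v i ord0 * w i ord0 <= enorm v * enorm w.
Proof.
have [->|v0] := eqVneq v 0.
  by rewrite enorm0 mul0r big1 // => i _; rewrite mxE mul0r.
have [->|w0] := eqVneq w 0.
  by rewrite enorm0 mulr0 big1 // => i _; rewrite mxE mulr0.
have ab_gt0 : 0 < enorm v * enorm w.
  by rewrite mulr_gt0 // lt0r enorm_ge0 enorm_eq0 ?v0 ?w0.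
set P := \sum_(i < m) _; set a := enorm v; set b := enorm w.
(* 2 a b (a b - P) = \sum_i (b v_i - a w_i)^2 *)
have : 0 <= 2 * (a * b) * (a * b - P).
  have -> : 2 * (a * b) * (a * b - P) = b ^+ 2 * \sum_(i < m) v i ord0 ^+ 2
      - 2 * (a * b) * P + a ^+ 2 * \sum_(i < m) w i ord0 ^+ 2.
    by rewrite -!sqr_enorm -/a -/b; ring.
  rewrite /P !mulr_sumr -sumrB -big_split sumr_ge0 // => i _ /=.
  by rewrite (_ : _ + _ = (b * v i ord0 - a * w i ord0) ^+ 2) ?sqr_ge0 //; ring.
by rewrite pmulr_rge0 ?subr_ge0 // mulr_gt0.
Qed.

Lemma enormD v w : enorm (v + w) <= enorm v + enorm w.
Proof.
have vw0 : 0 <= enorm v + enorm w by rewrite addr_ge0 ?enorm_ge0.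
rewrite -(ger0_norm vw0) -sqrtr_sqr ler_sqrt ?sqr_ge0 // sqrrD !sqr_enorm.
have -> : \sum_(i < m) (v + w) i ord0 ^+ 2 = \sum_(i < m) v i ord0 ^+ 2
    + 2 * \sum_(i < m) v i ord0 * w i ord0 + \sum_(i < m) w i ord0 ^+ 2.
  by rewrite mulr_sumr -!big_split; apply: eq_bigr => i _ /=; rewrite mxE; ring.
by rewrite lerD2r lerD2l mulr_natl ler_wMn2r // sum_mul_le_enorm.
Qed.

Lemma norm_coord_le_enorm v (i : 'I_m) : `|v i ord0| <= enorm v.
Proof.
rewrite -sqrtr_sqr ler_sqrt ?sumr_ge0 // => [|j _]; last exact: sqr_ge0.
by rewrite (bigD1 i) //= lerDl sumr_ge0 // => j _; rewrite sqr_ge0.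
Qed.

Lemma norm_coord_add_le_enorm v (i j : 'I_m) : i != j ->
  `|v i ord0| + `|v j ord0| <= Num.sqrt 2 * enorm v.
Proof.
move=> ij; set x := v i ord0; set y := v j ord0.
rewrite -(ger0_norm (addr_ge0 (normr_ge0 x) (normr_ge0 y))) -sqrtr_sqr.
rewrite -sqrtrM // ler_sqrt ?mulr_ge0 ?sumr_ge0 // => [|k _]; last exact: sqr_ge0.
rewrite (bigD1 i) //= (bigD1 j) 1?eq_sym //= -/x -/y.
have rest : 0 <= \sum_(k < m | (k != i) && (k != j)) v k ord0 ^+ 2.
  by rewrite sumr_ge0 // => k _; rewrite sqr_ge0.
have := sqr_ge0 (`|x| - `|y|).
by rewrite sqrrB sqrrD !real_normK ?num_real //; lra.
Qed.

Lemma enorm_le_sum_norm v : enorm v <= \sum_(i < m) `|v i ord0|.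
Proof.
have s0 : 0 <= \sum_(i < m) `|v i ord0| by rewrite sumr_ge0.
rewrite -(ger0_norm s0) -sqrtr_sqr ler_sqrt ?sqr_ge0 // expr2 mulr_suml.
apply: ler_sum => i _; rewrite -real_normK ?num_real // expr2 ler_wpM2l //.
by rewrite (bigD1 i) //= lerDl sumr_ge0.
Qed.

Lemma enorm_continuous : continuous (@enorm R m).
Proof.
move=> v; pose sumsq (w : 'cV[R]_m) := \sum_(i < m) w i ord0 ^+ 2.
apply: (@continuous_comp _ _ _ sumsq); last exact: sqrt_continuous.
apply: cvg_big => [||i _].
- exact: pseudometric_normed_Zmodule.add_continuous.
- exact: nbhs_filter.
- apply: (@continuous_comp _ _ _ (fun w : 'cV[R]_m => w i ord0) (fun x => x ^+ 2)).
    exact: coord_continuous.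
  exact: exprn_continuous.
Qed.

End EuclideanNorm.

Section OperatorNorm.
Context {R : realType} {m p : nat} (A : 'M[R]_(m, p)).

Lemma enorm_mulmx_le_sum_norm (v : 'cV[R]_p) :
  enorm (A *m v) <= (\sum_(i < m) \sum_(j < p) `|A i j|) * enorm v.
Proof.
apply: le_trans (enorm_le_sum_norm _) _; rewrite mulr_suml; apply: ler_sum => i _.
rewrite mxE mulr_suml; apply: le_trans (ler_norm_sum _ _ _) _.
by apply: ler_sum => j _; rewrite normrM ler_wpM2l // norm_coord_le_enorm.
Qed.

Lemma opnorm_has_sup :
  has_sup [set enorm (A *m v) | v in [set v : 'cV[R]_p | enorm v <= 1]].
Proof.
split; first by exists (enorm (A *m 0)), 0; rewrite //= enorm0.
exists (\sum_(i < m) \sum_(j < p) `|A i j|) => _ [v /= v1 <-].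
apply: le_trans (enorm_mulmx_le_sum_norm v) _.
by rewrite ler_piMr ?sumr_ge0 // => i _; rewrite sumr_ge0.
Qed.

Lemma enorm_mulmx_le_opnorm (v : 'cV[R]_p) :
  enorm v <= 1 -> enorm (A *m v) <= opnorm A.
Proof.
by move=> v1; rewrite /opnorm; apply: (sup_upper_bound opnorm_has_sup); exists v.
Qed.

Lemma enorm_mulmx_le (v : 'cV[R]_p) : enorm (A *m v) <= opnorm A * enorm v.
Proof.
have [->|v0] := eqVneq v 0; first by rewrite mulmx0 !enorm0 mulr0.
have nv_gt0 : 0 < enorm v by rewrite lt0r enorm_eq0 v0 enorm_ge0.
have nvV_ge0 : 0 <= (enorm v)^-1 by rewrite invr_ge0 ltW.
rewrite -ler_pdivrMr // mulrC -[(enorm v)^-1]ger0_norm // -enormZ scalemxAr.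
by apply: enorm_mulmx_le_opnorm; rewrite enormZ ger0_norm // mulVf ?gt_eqF.
Qed.

Lemma norm_entry_le_opnorm i j : `|A i j| <= opnorm A.
Proof.
have -> : A i j = (A *m (delta_mx j ord0 : 'cV[R]_p)) i ord0.
  rewrite mxE (bigD1 j) //= mxE !eqxx mulr1 big1 ?addr0 // => k kj.
  by rewrite mxE (negbTE kj) mulr0.
apply: le_trans (norm_coord_le_enorm _ i) (enorm_mulmx_le_opnorm _ _).
rewrite /enorm (bigD1 j) //= mxE !eqxx big1 ?addr0 ?expr1n ?sqrtr1 // => k kj.
by rewrite mxE (negbTE kj) expr0n.
Qed.

End OperatorNorm.

Section Gronwall.
Context {R : realType}.

Lemma is_derive_mx_entry {m p : nat} {f : R -> 'M[R]_(m, p)} {s : R} {df} i j :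
  is_derive s 1 f df -> is_derive s 1 (fun u => f u i j) (df i j).
Proof.
move=> [fd <-]; have fij : derivable (fun u => f u i j) s 1 by move/derivable_mxP : fd.
by apply: DeriveDef => //; rewrite derive_mx // mxE.
Qed.

Lemma is_derive_continuous (f : R -> R) (s df : R) :
  is_derive s 1 f df -> {for s, continuous f}.
Proof. by move=> [fd _]; apply/differentiable_continuous/derivable1_diffP. Qed.

Lemma scalar_gronwall (f : R -> R) (a c t0 t1 t : R) :
  0 < a -> t0 < t < t1 ->
  (forall s, t0 < s < t1 -> derivable f s 1) ->
  (forall s, t0 < s < t1 -> derive1 f s <= a * f s + c) ->
  f s @[s --> t0^'+] --> f t0 ->
  f t + c / a <= expR (a * (t - t0)) * (f t0 + c / a).
Proof.
move=> a_gt0 /andP[t0t tt1] fd dfle fc.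
pose E s := expR (- a * (s - t0)).
pose F s := E s * (f s + c / a).
have DE (s : R) : is_derive s 1 E (E s * - a).
  apply: (@is_derive1_comp _ expR (fun u => - a * (u - t0))).
  by apply: is_derive_eq; rewrite /GRing.scale /= subr0 mulr1.
have DF (s : R) : t0 < s < t1 -> is_derive s 1 F (E s * (derive1 f s - (a * f s + c))).
  move=> /fd /derivableP fs.
  have := is_deriveM (DE s) (is_deriveD fs (is_derive_cst (c / a) s 1)).
  move/is_derive_eq; apply; rewrite /GRing.scale /= addr0 !fctE /cst derive1E.
  by field; rewrite gt_eqF.
have inI s : s \in `]t0, t[ -> t0 < s < t1.
  by rewrite in_itv /= => /andP[-> /lt_trans ->].
have dF s : s \in `]t0, t[ -> derivable F s 1 by move=> /inI /DF [].
have dF_le0 s : s \in `]t0, t[ -> derive1 F s <= 0.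
  move=> /inI sI; rewrite derive1E; have [_ ->] := DF s sI.
  by rewrite pmulr_rle0 ?expR_gt0 // subr_le0 dfle.
have cF : {within `[t0, t], continuous F}.
  apply: derivable_oo_LRcontinuous_within; split => //.
  - apply: cvgM; first by apply: cvg_at_right_filter; exact: is_derive_continuous (DE t0).
    by apply: cvgD => //; exact: cvg_cst.
  - by apply: cvg_at_left_filter; apply: is_derive_continuous (DF t _); rewrite t0t.
have Fle : F t <= F t0.
  by apply: (ler0_derive1_le_cc dF dF_le0 cF); rewrite ?in_itv /= ?lexx ?ltW.
by rewrite /F /E subrr mulr0 expR0 mul1r mulNr expRN ler_pdivrMl ?expR_gt0 in Fle.
Qed.

Lemma is_derive_sqr_enorm {m : nat} {z : R -> 'cV[R]_m} {s : R} {dz} :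
  is_derive s 1 z dz ->
  is_derive s 1 (fun u => enorm (z u) ^+ 2) (2 * \sum_(i < m) z s i ord0 * dz i ord0).
Proof.
move=> zd.
have -> : (fun u => enorm (z u) ^+ 2) = \sum_(i < m) (fun u => z u i ord0) ^+ 2.
  by apply/funext => u; rewrite sqr_enorm fct_sumE; apply: eq_bigr => i _.
apply: is_derive_eq (is_derive_sum (fun i => is_deriveX 2 (is_derive_mx_entry i ord0 zd))) _.
by rewrite mulr_sumr; apply: eq_bigr => i _; rewrite /GRing.scale /= expr1 mulrA.
Qed.

Lemma le_sqrt_sqrD (x e : R) : 0 <= e -> x <= Num.sqrt (x ^+ 2 + e).
Proof.
move=> e_ge0; apply: le_trans (ler_norm x) _.
by rewrite -sqrtr_sqr ler_sqrt ?lerDl // addr_ge0 ?sqr_ge0.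
Qed.

Lemma derive1_smoothed_enorm_le {m : nat} {z : R -> 'cV[R]_m} {s eps : R} {dz} :
  0 < eps -> is_derive s 1 z dz ->
  let w u := Num.sqrt (enorm (z u) ^+ 2 + eps ^+ 2) in
  derivable w s 1 /\ derive1 w s <= enorm dz.
Proof.
move=> eps_gt0 zd w.
pose P := \sum_(i < m) z s i ord0 * dz i ord0.
have q_gt0 u : 0 < enorm (z u) ^+ 2 + eps ^+ 2 by rewrite ltr_wpDl ?sqr_ge0 ?exprn_gt0.
have Dq : is_derive s 1 (fun u => enorm (z u) ^+ 2 + eps ^+ 2) (2 * P).
  by have := is_deriveD (is_derive_sqr_enorm zd) (is_derive_cst (eps ^+ 2) s 1); rewrite addr0.
have Dw : is_derive s 1 w ((2 * w s)^-1 * (2 * P)).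
  exact: (@is_derive1_comp _ Num.sqrt (fun u => enorm (z u) ^+ 2 + eps ^+ 2) s _ _
    (is_derive1_sqrt (q_gt0 s)) Dq).
have w_gt0 : 0 < w s by rewrite sqrtr_gt0.
have zw : enorm (z s) <= w s by exact: le_sqrt_sqrD _ _ (sqr_ge0 _).
case: Dw => wd Dw; split => //.
rewrite derive1E Dw invfM mulrACA mulVf ?pnatr_eq0 // mul1r mulrC.
rewrite ler_pdivrMr //; apply: le_trans (sum_mul_le_enorm _ _) _.
by rewrite mulrC ler_wpM2l ?enorm_ge0.
Qed.

Lemma enorm_sub_le_gronwall {m : nat} (y dy : R -> 'cV[R]_m) (a c t0 t1 t : R) :
  0 < a -> t0 < t < t1 ->
  (forall s, t0 < s < t1 -> is_derive s 1 y (dy s)) ->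
  (forall s, t0 < s < t1 -> enorm (dy s) <= a * enorm (y s - y t0) + c) ->
  y s @[s --> t0^'+] --> y t0 ->
  enorm (y t - y t0) <= c / a * (expR (a * (t - t0)) - 1).
Proof.
move=> a_gt0 tI yd dyle yc; set e := expR _.
have e_gt0 : 0 < e := expR_gt0 _.
apply/ler_addgt0Pr => d d_gt0.
pose eps := d / e.
have eps_gt0 : 0 < eps by rewrite divr_gt0.
pose w u := Num.sqrt (enorm (y u - y t0) ^+ 2 + eps ^+ 2).
have zd s : t0 < s < t1 -> is_derive s 1 (fun u => y u - y t0) (dy s).
  by move=> /yd ys; have := is_deriveB ys (is_derive_cst (y t0) s 1); rewrite subr0.
have wt0 : w t0 = eps by rewrite /w subrr enorm0 expr0n add0r sqrtr_sqr gtr0_norm.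
have wle : w t + c / a <= e * (eps + c / a).
  rewrite -wt0; apply: (scalar_gronwall _ _ _ _ t1) => //.
  - by move=> s /zd /(derive1_smoothed_enorm_le eps_gt0) [].
  - move=> s sI; have [_ /le_trans] := derive1_smoothed_enorm_le eps_gt0 (zd s sI).
    apply; apply: le_trans (dyle s sI) _.
    by rewrite lerD2r ler_pM2l //; exact: le_sqrt_sqrD _ _ (sqr_ge0 _).
  - have ey : enorm (y u - y t0) @[u --> t0^'+] --> enorm (y t0 - y t0).
      apply: (cvg_comp (fun u => y u - y t0) (@enorm R m)); last exact: enorm_continuous.
      by apply: cvgB => //; exact: cvg_cst.
    apply: (cvg_comp (fun u => enorm (y u - y t0) ^+ 2 + eps ^+ 2) Num.sqrt).
      apply: cvgD; last exact: cvg_cst.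
      by apply: (cvg_comp _ (fun x => x ^+ 2) ey); exact: exprn_continuous.
    by rewrite /w subrr enorm0 expr0n add0r; exact: sqrt_continuous.
apply: le_trans (le_sqrt_sqrD _ _ (sqr_ge0 eps)) _.
rewrite -(lerD2r (c / a)); apply: le_trans wle _.
rewrite /eps mulrDr mulrC divfK ?gt_eqF //.
by rewrite [X in _ <= X](_ : _ = d + e * (c / a)) //; ring.
Qed.

Lemma enorm_sub_le_affine_ode {m : nat} (x : R -> 'cV[R]_m) (A : 'M[R]_m) (b : 'cV[R]_m)
    (t0 t1 t : R) :
  0 < opnorm A -> t0 < t < t1 ->
  (forall s, t0 < s < t1 -> is_derive s 1 x (A *m x s + b)) ->
  x s @[s --> t0^'+] --> x t0 ->
  enorm (x t - x t0) <=
    (enorm (x t0) + enorm b / opnorm A) * (expR (opnorm A * (t - t0)) - 1).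
Proof.
move=> a_gt0 tI xd xc.
have -> : enorm (x t0) + enorm b / opnorm A =
    (opnorm A * enorm (x t0) + enorm b) / opnorm A by field; rewrite gt_eqF.
apply: (enorm_sub_le_gronwall x (fun s => A *m x s + b) _ _ _ t1) => // s sI.
have -> : A *m x s + b = A *m (x s - x t0) + (A *m x t0 + b).
  by rewrite mulmxBr addrA subrK.
apply: le_trans (enormD _ _) _; rewrite lerD ?enorm_mulmx_le //.
by apply: le_trans (enormD _ _) _; rewrite lerD2r enorm_mulmx_le.
Qed.

End Gronwall.

Section Platoon.
Context {R : realType}.

Lemma incr_seq_gap (u : nat -> R) :
  (forall k, u k < u k.+1) -> forall k q, ~ (u k < u q < u k.+1).
Proof.
move=> uS k q; have u_mono := le_mono (homo_ltn (@lt_trans _ R) uS).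
by rewrite !(leW_mono u_mono) ltEnat /= ltnS => /andP[kq]; rewrite leqNgt kq.
Qed.

Lemma cvg_at_right_of_within_ge0 {m : nat} (f : R -> 'cV[R]_m) (t0 : R) :
  {within [set t : R | 0 <= t], continuous f} -> 0 <= t0 ->
  f s @[s --> t0^'+] --> f t0.
Proof.
move=> fc t0_ge0; have t0_lt : t0 < t0 + 1 by rewrite ltrDl.
have fc_t0 : {within `[t0, t0 + 1], continuous f}.
  by apply: continuous_subspaceW fc => s /=; rewrite in_itv /= => /andP[/(le_trans t0_ge0)].
by have [_ ? _] := (continuous_within_itvP _ t0_lt).1 fc_t0.
Qed.

Lemma mulr_expRB1_le (a D d alpha : R) :
  0 < a -> 0 <= D -> 0 < alpha -> 0 <= d ->
  (0 < D -> d <= ln (alpha / D + 1) / a) ->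
  D * (expR (a * d) - 1) <= alpha.
Proof.
move=> a_gt0 D_ge0 alpha_gt0 d_ge0 dle.
have [D_gt0|D_le0] := ltP 0 D; last first.
  have -> : D = 0 by apply/le_anti; rewrite D_le0 D_ge0.
  by rewrite mul0r ltW.
have ln_gt0 : 0 < alpha / D + 1 by rewrite ltr_wpDl ?divr_ge0 ?ltW.
have ad_le : a * d <= ln (alpha / D + 1) by rewrite mulrC -ler_pdivlMr ?dle.
rewrite -ler_pdivlMl // lerBlDr [D^-1 * _]mulrC -[X in _ <= X]lnK ?posrE //.
by rewrite ler_expR.
Qed.

Lemma sidx_eq {T a b s : R} : 0 < T -> 0 <= a -> a <= s < b ->
  (forall j : nat, ~ (a < j%:R * T < b)) -> sidx T s = sidx T a.
Proof.
move=> T_gt0 a_ge0 /andP[a_le_s s_lt_b] no_mult.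
have /andP[ja_le ja_lt] : (sidx T a)%:R <= a / T < (sidx T a).+1%:R.
  by apply: truncn_itv; rewrite divr_ge0 // ltW.
have s_ge0 : 0 <= s / T by rewrite divr_ge0 ?(le_trans a_ge0 a_le_s) ?ltW.
apply/eqP; rewrite /sidx truncn_eq //; apply/andP; split.
  by apply: le_trans ja_le _; rewrite ler_pM2r ?invr_gt0.
rewrite ltr_pdivrMr // in ja_lt.
rewrite ltNge ler_pdivlMr //; apply/negP => js_le.
by apply: (no_mult (sidx T a).+1); rewrite ja_lt (le_lt_trans js_le).
Qed.

Lemma opnorm_Ac_gt0 (n : nat) (tau h kp kd : R) : 0 < opnorm (Ac n tau h kp kd).
Proof.
apply: lt_le_trans (norm_entry_le_opnorm _ (inord 0) (inord 1)).
by rewrite mxE !inordK //= normr1.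
Qed.

Lemma dgap_sub_le (n : nat) (x : R -> 'cV[R]_(sdim n)) (L : nat -> R) (i : nat)
    (t t' : R) :
  (2 <= i <= n)%N ->
  `|dgap x L i t - dgap x L i t'| <= Num.sqrt 2 * enorm (x t - x t').
Proof.
move=> /andP[i_ge2 i_le_n].
have [i1_lt i_lt i1_neq] : [/\ (pidx i.-1 < sdim n)%N, (pidx i < sdim n)%N
    & pidx i.-1 != pidx i].
  have [i1_neq0 i_neq0] : (i.-1 == 0)%N = false /\ (i == 0)%N = false.
    by split; apply/eqP; lia.
  by rewrite /pidx i1_neq0 i_neq0 /vidx /sdim; split; [lia | lia | apply/eqP; lia].
have -> : dgap x L i t - dgap x L i t' =
    (x t - x t') (inord (pidx i.-1)) ord0 - (x t - x t') (inord (pidx i)) ord0.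
  by rewrite /dgap /vcomp !mxE; ring.
apply: le_trans (ler_normB _ _) (norm_coord_add_le_enorm _ _ _ _).
by apply: contra i1_neq => /eqP/(congr1 val); rewrite /= !inordK // => ->.
Qed.

End Platoon.

Theorem theorem1 (R : realType) (n : nat) (tau h kp kd r T : R) (L : nat -> R)
    (l : nat -> nat -> bool)
    (tbrake gamma eta : R) (pb vb ab : R -> R) (ts : R)
    (x : R -> 'cV[R]_(sdim n)) (tt : nat -> R) (alpha : R) :
  (2 <= n)%N -> 0 < tau -> 0 < h -> 0 < r -> 0 < T ->
  (forall i : nat, (1 <= i <= n)%N -> 0 < L i) ->
  (* braking model parameters *)
  0 < tbrake -> 0 < gamma -> 0 < eta -> eta <= 1 / (4 * tau) ->
  (* (pb, vb, ab) solves the continuous-time braking model *)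
  {within [set t : R | 0 <= t], continuous pb} ->
  {within [set t : R | 0 <= t], continuous vb} ->
  {within [set t : R | 0 <= t], continuous ab} ->
  (forall t : R, 0 < t -> t != tbrake ->
     is_derive t 1 pb (vb t) /\ is_derive t 1 vb (ab t) /\
     is_derive t 1 ab ((- ab t +
        (if t < tbrake then 0 else Num.max (- gamma) (- eta * vb t))) / tau)) ->
  (* ts = t^* = min { t >= tbrake | - eta * vb t >= - gamma } *)
  tbrake <= ts -> - gamma <= - eta * vb ts ->
  (forall t : R, tbrake <= t < ts -> - eta * vb t < - gamma) ->
  (* platoon dynamics  dx/dt = Ac x + Bc u  with sampled/held inputs *)
  {within [set t : R | 0 <= t], continuous x} ->
  (forall t : R, 0 < t -> (forall j : nat, t != j%:R * T) ->
     is_derive t 1 x (Ac n tau h kp kd *m x t +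
                      Bc n tau h *m uin x tau T tbrake gamma eta ts (ab ts) l t)) ->
  (* e_i and its derivative as state components *)
  (forall t : R, 0 <= t -> forall i : nat, (1 <= i <= n)%N ->
     vcomp (x t) (e_idx i) =
       vcomp (x t) (pidx i.-1) - vcomp (x t) (pidx i) - L i
       - (r + h * vcomp (x t) (v_idx i)) /\
     vcomp (x t) (ed_idx i) =
       vcomp (x t) (v_idx i.-1) - vcomp (x t) (v_idx i) - h * vcomp (x t) (a_idx i)) ->
  (* simulation time instants, with S contained in T *)
  0 <= tt 0%N -> (forall k : nat, tt k < tt k.+1) ->
  (forall j : nat, exists k : nat, tt k = j%:R * T) ->
  0 < alpha ->
  (forall k : nat,
     let D := Num.sqrt 2 * (enorm (x (tt k)) +
                enorm (Bc n tau h *m uin x tau T tbrake gamma eta ts (ab ts) l (tt k))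
                / opnorm (Ac n tau h kp kd)) in
     0 < D -> tt k.+1 - tt k <= ln (alpha / D + 1) / opnorm (Ac n tau h kp kd)) ->
  forall (k i : nat) (t : R), (2 <= i <= n)%N -> tt k <= t < tt k.+1 ->
    `|dgap x L i t - dgap x L i (tt k)| <= alpha.
Proof.
move=> _ _ _ _ T_gt0 _ _ _ _ _ _ _ _ _ _ _ _ xc xd _ tt0_ge0 ttS tt_cover alpha_gt0 step
  k i t iI /andP[tk_le_t t_lt_tk1].
set A := Ac n tau h kp kd; set u := uin x tau T tbrake gamma eta ts (ab ts) l.
have a_gt0 : 0 < opnorm A := opnorm_Ac_gt0 n tau h kp kd.
have tk_ge0 : 0 <= tt k.
  by rewrite (le_trans tt0_ge0) // (le_mono (homo_ltn (@lt_trans _ R) ttS)).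
have no_sample j : ~ (tt k < j%:R * T < tt k.+1).
  by have [q <-] := tt_cover j; exact: incr_seq_gap.
have u_const s : tt k <= s < tt k.+1 -> u s = u (tt k).
  by move=> sI; rewrite /u /uin (sidx_eq T_gt0 tk_ge0 sI no_sample).
have xd_k s : tt k < s < tt k.+1 -> is_derive s 1 x (A *m x s + Bc n tau h *m u (tt k)).
  move=> /andP[tk_lt_s s_lt]; rewrite -(u_const s) ?s_lt ?ltW //.
  apply: xd => [|j]; first exact: le_lt_trans tk_lt_s.
  by apply/eqP => s_eq; apply: (no_sample j); rewrite -s_eq tk_lt_s.
have [->|t_neq] := eqVneq t (tt k); first by rewrite subrr normr0 ltW.
have tk_lt_t : tt k < t by rewrite lt_def t_neq.
have := enorm_sub_le_affine_ode x A _ (tt k) (tt k.+1) t a_gt0 _ xd_k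
  (cvg_at_right_of_within_ge0 _ _ xc tk_ge0).
rewrite tk_lt_t t_lt_tk1 => /(_ isT) incr.
apply: le_trans (dgap_sub_le _ _ _ _ _ _ iI) _.
apply: le_trans (ler_wpM2l (sqrtr_ge0 _) incr) _; rewrite mulrA.
apply: mulr_expRB1_le => //.
- by rewrite mulr_ge0 ?sqrtr_ge0 ?addr_ge0 ?divr_ge0 ?enorm_ge0 // ltW.
- by rewrite subr_ge0.
- by move=> /step; apply: le_trans; rewrite lerD2r ltW.
Qed.
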